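(* Let $Q_k^A,Q_k^B$ be the SDQ iterates, $Q_k^{\mathrm{err}}=Q_k^A-Q_k^B$, and $w_k^A,w_k^B$ the associated noise vectors (see context). Define \[ Q_{k+1}^{\mathrm{err}_L}=(I+\alpha\gamma DP\Pi_{Q_k^B}-\alpha D)Q_k^{\mathrm{err}_L}+\alpha w_k^A-\alpha w_k^B, \] with initial vector $Q_0^{\mathrm{err}_L}\in\mathbb{R}^{|\mathcal{S}||\mathcal{A}|}$. If $Q_0^{\mathrm{err}_L}\le Q_0^{\mathrm{err}}$ element-wise, then $Q_k^{\mathrm{err}_L}\le Q_k^{\mathrm{err}}$ element-wise for all $k\ge0$.
   Context: Finite MDP with states $\mathcal{S}=\{1,\dots,|\mathcal{S}|\}$, actions $\mathcal{A}=\{1,\dots,|\mathcal{A}|\}$, transitions $P(s'|s,a)$, bounded deterministic reward $r(s,a,s')$, discount $\gamma\in(0,1)$. Sampling distribution $d(s,a)>0$ on $\mathcal{S}\times\mathcal{A}$; at iteration $k$, $(s_k,a_k)\sim d$ i.i.d., $s_k'\sim P(\cdot|s_k,a_k)$, $r_{k+1}=r(s_k,a_k,s_k')$. Constant step-size $\alpha\in(0,1)$. SDQ: only entry $(s_k,a_k)$ is updated, $Q_{k+1}^A(s_k,a_k)=Q_k^A(s_k,a_k)+\alpha\{r_{k+1}+\gamma Q_k^A(s_k',\arg\max_aQ_k^B(s_k',a))-Q_k^A(s_k,a_k)\}$ and symmetrically for $B$ with roles of $A,B$ swapped. Vector notation: $Q\in\mathbb{R}^{|\mathcal{S}||\mathcal{A}|}$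 stacks $Q(\cdot,1),\dots,Q(\cdot,|\mathcal{A}|)$, so $Q(s,a)=(e_a\otimes e_s)^TQ$. $D$ is the diagonal matrix with entry $d(s,a)$ at position $(s,a)$. $P\in\mathbb{R}^{|\mathcal{S}||\mathcal{A}|\times|\mathcal{S}|}$ has row $(s,a)$ equal to $P(\cdot|s,a)$. $R(s,a)=\mathbb{E}[r(s,a,s')|s,a]$. For $Q$, $\pi_Q(s)=\arg\max_aQ(s,a)$ (fixed tie-breaking) and $\Pi_Q\in\mathbb{R}^{|\mathcal{S}|\times|\mathcal{S}||\mathcal{A}|}$ has $s$-th row $e_{\pi_Q(s)}^T\otimes e_s^T$. Noise: $w_k^A=(e_{a_k}\otimes e_{s_k})r_{k+1}+\gamma(e_{a_k}\otimes e_{s_k})e_{s_k'}^T\Pi_{Q_k^B}Q_k^A-(e_{a_k}\otimes e_{s_k})(e_{a_k}\otimes e_{s_k})^TQ_k^A-(DR+\gamma DP\Pi_{Q_k^B}Q_k^A-DQ_k^A)$, and $w_k^B$ is the same with $A$ and $B$ swapped. *)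

(* States/actions are arbitrary finite types; Q-functions are
   functions S -> A -> R (the entry (s,a) of the stacked vector Q). *)
From mathcomp Require Import all_boot all_order all_algebra.
Set Implicit Arguments. Unset Strict Implicit. Unset Printing Implicit Defensive.
Import Order.TTheory GRing.Theory Num.Theory.
Local Open Scope ring_scope.

Section SDQ.
Variables (R : realFieldType) (S A : finType).
Variables (P : S -> A -> S -> R)      (* P s a s' = P(s'|s,a) *)
          (r : S -> A -> S -> R)
          (d : S -> A -> R)
          (gamma alpha : R)
          (pi : (S -> A -> R) -> S -> A)  (* greedy policy pi_Q, fixed tie-breaking *)
          (s_ : nat -> S) (a_ : nat -> A) (s'_ : nat -> S).

Definition Qfun := S -> A -> R.

(* indicator of (e_{a_k} (x) e_{s_k}) at entry (s,a) *)
Definition ind (k : nat) (s : S) (a : A) : R :=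
  if (s == s_ k) && (a == a_ k) then 1 else 0.

(* r_{k+1} *)
Definition rew (k : nat) : R := r (s_ k) (a_ k) (s'_ k).

Definition Rexp (s : S) (a : A) : R := \sum_(s' : S) P s a s' * r s a s'.

Definition PPi (QY QX : Qfun) (s : S) (a : A) : R :=
  \sum_(s' : S) P s a s' * QX s' (pi QY s').

Definition sdq_upd (k : nat) (QX QY : Qfun) : Qfun := fun s a =>
  if (s == s_ k) && (a == a_ k)
  then QX s a + alpha * (rew k + gamma * QX (s'_ k) (pi QY (s'_ k)) - QX s a)
  else QX s a.

Fixpoint sdq (QA0 QB0 : Qfun) (k : nat) : Qfun * Qfun :=
  match k with
  | 0 => (QA0, QB0)
  | k'.+1 => let QA := (sdq QA0 QB0 k').1 in let QB := (sdq QA0 QB0 k').2 in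
             (sdq_upd k' QA QB, sdq_upd k' QB QA)
  end.

(* noise vector w_k for QX (with QY selecting actions):
   w = e r_{k+1} + gamma e e_{s'_k}^T Pi_{QY} QX - e e^T QX
       - (D R + gamma D P Pi_{QY} QX - D QX),  e = e_{a_k} (x) e_{s_k} *)
Definition noise (k : nat) (QX QY : Qfun) : Qfun := fun s a =>
  ind k s a * rew k + gamma * (ind k s a * QX (s'_ k) (pi QY (s'_ k)))
  - ind k s a * QX (s_ k) (a_ k)
  - (d s a * Rexp s a + gamma * (d s a * PPi QY QX s a) - d s a * QX s a).

Definition wA (QA0 QB0 : Qfun) (k : nat) : Qfun :=
  noise k (sdq QA0 QB0 k).1 (sdq QA0 QB0 k).2.
Definition wB (QA0 QB0 : Qfun) (k : nat) : Qfun :=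
  noise k (sdq QA0 QB0 k).2 (sdq QA0 QB0 k).1.

Fixpoint errL (QA0 QB0 E0 : Qfun) (k : nat) : Qfun :=
  match k with
  | 0 => E0
  | k'.+1 => let E := errL QA0 QB0 E0 k' in
             let QB := (sdq QA0 QB0 k').2 in
             fun s a => E s a + alpha * gamma * (d s a * PPi QB E s a)
                        - alpha * (d s a * E s a)
                        + alpha * wA QA0 QB0 k' s a - alpha * wB QA0 QB0 k' s a
  end.

End SDQ.

(* Both SDQ updates have the form Q + alpha (D R + gamma D P Pi Q - D Q + w), so the
   gap Q^err - Q^errL evolves as
     (I - alpha D) (Q^err - Q^errL)
       + alpha gamma D (P Pi_B Q^A - P Pi_A Q^B - P Pi_B Q^errL).
   Since alpha d <= 1 the first term keeps the sign of the gap.  In the second,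
   greediness of Pi_B for Q^B gives P Pi_A Q^B <= P Pi_B Q^B, so it is at least
   alpha gamma D P Pi_B (Q^err - Q^errL), which is nonnegative because P is. *)
From mathcomp Require Import all_boot all_order all_algebra.
From mathcomp Require Import ring lra.
Import Order.TTheory GRing.Theory Num.Theory.
Local Open Scope ring_scope.

Lemma ler_sum_term {R : numDomainType} {I : finType} (F : I -> R) (i : I) :
  (forall j, 0 <= F j) -> F i <= \sum_j F j.
Proof.
move=> F_ge0; rewrite (bigD1 i) //= lerDl.
by apply: sumr_ge0 => j _.
Qed.

Section SDQComparison.
Variables (R : realFieldType) (S A : finType).
Variables (P : S -> A -> S -> R) (r : S -> A -> S -> R) (d : S -> A -> R)
          (gamma alpha : R) (pi : (S -> A -> R) -> S -> A)
          (s_ : nat -> S) (a_ : nat -> A) (s'_ : nat -> S).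

Local Notation PPi := (PPi P pi).
Local Notation Rexp := (Rexp P r).
Local Notation noise := (noise P r d gamma pi s_ a_ s'_).
Local Notation sdq_upd := (sdq_upd r gamma alpha pi s_ a_ s'_).

Hypothesis P_ge0 : forall s a s', 0 <= P s a s'.
Hypothesis pi_greedy : forall (Q : S -> A -> R) s a, Q s a <= Q s (pi Q s).

Lemma sdq_updE k (QX QY : S -> A -> R) s a :
  sdq_upd k QX QY s a =
  QX s a + alpha * (d s a * Rexp s a + gamma * (d s a * PPi QY QX s a)
                    - d s a * QX s a + noise k QX QY s a).
Proof.
rewrite /sdq_upd /noise /ind.
by case: ifP => [/andP[/eqP -> /eqP ->]|_]; ring.
Qed.

Lemma PPiB (QY QX QZ : S -> A -> R) s a :
  PPi QY (fun s a => QX s a - QZ s a) s a = PPi QY QX s a - PPi QY QZ s a.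
Proof. by rewrite /PPi -sumrB; apply: eq_bigr => s' _; rewrite mulrBr. Qed.

Lemma PPi_le (QY QX QZ : S -> A -> R) s a :
  (forall s a, QX s a <= QZ s a) -> PPi QY QX s a <= PPi QY QZ s a.
Proof. by move=> leXZ; apply: ler_sum => s' _; rewrite ler_wpM2l. Qed.

Lemma PPi_greedy_le (QY QX : S -> A -> R) s a : PPi QY QX s a <= PPi QX QX s a.
Proof. by apply: ler_sum => s' _; rewrite ler_wpM2l. Qed.

Lemma errL_step_le_upd_diff k (QA QB L : S -> A -> R) s a :
  0 <= alpha -> 0 <= gamma -> 0 <= d s a -> alpha * d s a <= 1 ->
  (forall s a, L s a <= QA s a - QB s a) ->
  L s a + alpha * gamma * (d s a * PPi QB L s a) - alpha * (d s a * L s a)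
    + alpha * noise k QA QB s a - alpha * noise k QB QA s a
  <= sdq_upd k QA QB s a - sdq_upd k QB QA s a.
Proof.
move=> alpha_ge0 gamma_ge0 d_ge0 alpha_d_le1 leL.
have gap_ge0 : 0 <= (1 - alpha * d s a) * (QA s a - QB s a - L s a).
  by apply: mulr_ge0; have := leL s a; lra.
have PPi_gap_ge0 : 0 <= PPi QB QA s a - PPi QA QB s a - PPi QB L s a.
  have := PPi_greedy_le QA QB s a.
  have := PPi_le QB _ _ s a leL; rewrite PPiB; lra.
(* The difference of the two sides is exactly the sum of these two terms. *)
have := mulr_ge0 (mulr_ge0 (mulr_ge0 alpha_ge0 gamma_ge0) d_ge0) PPi_gap_ge0.
rewrite !sdq_updE; nra.
Qed.

End SDQComparison.

Theorem proposition5 (R : realFieldType) (S A : finType)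
    (P : S -> A -> S -> R) (r : S -> A -> S -> R) (d : S -> A -> R)
    (gamma alpha : R) (pi : (S -> A -> R) -> S -> A)
    (s_ : nat -> S) (a_ : nat -> A) (s'_ : nat -> S)
    (QA0 QB0 E0 : S -> A -> R) :
  (forall s a s', 0 <= P s a s') ->
  (forall s a, \sum_(s' : S) P s a s' = 1) ->
  (forall s a, 0 < d s a) ->
  \sum_(s : S) \sum_(a : A) d s a = 1 ->
  0 < gamma < 1 ->
  0 < alpha < 1 ->
  (forall (Q : S -> A -> R) s a, Q s a <= Q s (pi Q s)) ->
  (forall s a, E0 s a <= QA0 s a - QB0 s a) ->
  forall (k : nat) (s : S) (a : A),
    errL P r d gamma alpha pi s_ a_ s'_ QA0 QB0 E0 k s a
    <= (sdq r gamma alpha pi s_ a_ s'_ QA0 QB0 k).1 s a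
       - (sdq r gamma alpha pi s_ a_ s'_ QA0 QB0 k).2 s a.
Proof.
move=> P_ge0 _ d_gt0 d_sum1 /andP[gamma_gt0 _] /andP[alpha_gt0 alpha_lt1]
  pi_greedy le0 k.
have d_ge0 s a : 0 <= d s a by exact: ltW.
have alpha_d_le1 s a : alpha * d s a <= 1.
  have : d s a <= 1.
    rewrite -d_sum1; apply: le_trans (ler_sum_term (d s) a (d_ge0 s)) _.
    by apply: ler_sum_term => s'; apply: sumr_ge0 => a' _.
  have := d_ge0 s a; nra.
elim: k => [|k IH] s a; first exact: le0.
exact: errL_step_le_upd_diff (ltW alpha_gt0) (ltW gamma_gt0) (d_ge0 s a) (alpha_d_le1 s a) IH.
Qed.
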